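(* Let $\mathcal D=(C_1,C_2,C_3,C_4)$ be any ordered, oriented Descartes configuration and let $\mathbf D=\tfrac12\begin{pmatrix}-1&1&1&1\\1&-1&1&1\\1&1&-1&1\\1&1&1&-1\end{pmatrix}$. Then $\mathbf D\in\mathrm{Aut}(Q_D)$, and $\mathbf D\mathbf W_{\mathcal D}=\mathbf W_{\mathcal D^\perp}$ for an ordered, oriented Descartes configuration $\mathcal D^\perp=(C_1^\perp,\dots,C_4^\perp)$ in which, for each $i$, the circle $C_i^\perp$ is (as an unoriented circle or line) the circle through the three tangency points of $\mathcal D$ that do not lie on $C_i$. The configuration $\mathcal D^\perp$ has the same six tangency points as $\mathcal D$, and its circles meet those of $\mathcal D$ orthogonally at these points.
   Context: Oriented circles: radius $r$, oriented curvature $\pm1/r$, $+$ iff the interior is the bounded open disk; oriented lines have curvature $0$, unit normal $\mathbf h$, interior the open half-plane into which $\mathbf h$ points. A Descartes configuration: four mutually tangent circles/lines with six distinct tangency points (parallel lines tangent at $\infty$); oriented if the four interiors are pairwise disjoint or become so after reversing all orientations. Augmented curvature-center coordinates: for center $\mathbf c$ and oriented radius $r$, $\mathbf w(C)=((|\mathbf c|^2-r^2)/r,1/r,c_1/r,c_2/r)$; for the line $\mathbf x\cdot\mathbf h=m$ with interior-pointing unit normal $\mathbf h$, $\mathbf w(C)=(2m,0,h_1,h_2)$. $\mathbf W_{\mathcal D}$ has $k$-th row $\mathbf w(C_k)$. $\mathbf Q_D=\mathbf I-\frac12\mathbf 1\mathbf 1^T$ and $\mathrm{Aut}(Q_D)=\{\mathbf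 U:\mathbf U^T\mathbf Q_D\mathbf U=\mathbf Q_D\}$. *)

From HB Require Import structures.
From mathcomp Require Import all_boot all_order all_algebra.
From mathcomp Require Import reals.
Set Implicit Arguments. Unset Strict Implicit. Unset Printing Implicit Defensive.
Import Order.TTheory GRing.Theory Num.Theory.
Local Open Scope ring_scope.

Section Descartes.
Variable R : realType.

Definition pt := (R * R)%type.
Definition dot (x y : pt) : R := x.1 * y.1 + x.2 * y.2.
Definition sub (x y : pt) : pt := (x.1 - y.1, x.2 - y.2).

(* OCirc c r : center c, oriented (signed) radius r (r <> 0);
               r > 0 iff the interior is the bounded open disk.
   OLine h m : the line x.h = m with unit normal h; the interior is the
               open half-plane {x | x.h > m} into which h points. *)
Inductive ocircle :=
| OCirc of pt & R
| OLine of pt & R.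

Definition valid (C : ocircle) : Prop :=
  match C with
  | OCirc _ r => r <> 0
  | OLine h _ => dot h h = 1
  end.

(* Points of the extended plane: Some x finite, None = the point at infinity. *)
Definition ept := option pt.

Definition on (C : ocircle) (p : ept) : Prop :=
  match C, p with
  | OCirc c r, Some x => dot (sub x c) (sub x c) = r ^+ 2
  | OCirc _ _, None => False
  | OLine h m, Some x => dot x h = m
  | OLine _ _, None => True
  end.

Definition interior (C : ocircle) (x : pt) : Prop :=
  match C with
  | OCirc c r => if 0 < r then dot (sub x c) (sub x c) < r ^+ 2
                 else r ^+ 2 < dot (sub x c) (sub x c)
  | OLine h m => m < dot x h
  end.

Definition reverse (C : ocircle) : ocircle :=
  match C with
  | OCirc c r => OCirc c (- r)
  | OLine h m => OLine (- h.1, - h.2) (- m)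
  end.

(* C and C' are tangent at p : they meet (in the extended plane) exactly at p.
   (Parallel distinct lines are tangent at infinity.) *)
Definition tangent_at (C C' : ocircle) (p : ept) : Prop :=
  forall q : ept, (on C q /\ on C' q) <-> q = p.

Definition config := 'I_4 -> ocircle.

(* Descartes configuration: four mutually tangent circles/lines with six
   distinct tangency points. *)
Definition descartes (D : config) : Prop :=
  (forall i, valid (D i)) /\
  (forall i j : 'I_4, i != j -> exists p, tangent_at (D i) (D j) p) /\
  (forall (i j k l : 'I_4) p, i != j -> k != l ->
     tangent_at (D i) (D j) p -> tangent_at (D k) (D l) p ->
     (i == k) && (j == l) || (i == l) && (j == k)).

Definition interiors_disjoint (D : config) : Prop :=
  forall i j : 'I_4, i != j -> forall x, ~ (interior (D i) x /\ interior (D j) x).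

Definition oriented_descartes (D : config) : Prop :=
  descartes D /\
  (interiors_disjoint D \/ interiors_disjoint (fun i => reverse (D i))).

Definition wvec (C : ocircle) : 'rV[R]_4 :=
  match C with
  | OCirc c r => \row_(k < 4)
      [:: (dot c c - r ^+ 2) / r; 1 / r; c.1 / r; c.2 / r]`_k
  | OLine h m => \row_(k < 4) [:: 2 * m; 0; h.1; h.2]`_k
  end.

Definition Wmx (D : config) : 'M[R]_4 := \matrix_(k < 4, l < 4) wvec (D k) 0 l.

Definition QD : 'M[R]_4 := 1%:M - (1 / 2) *: const_mx 1.

Definition AutQD (U : 'M[R]_4) : Prop := U^T *m QD *m U = QD.

Definition Dmx : 'M[R]_4 :=
  \matrix_(i < 4, j < 4) (if i == j then - (1 / 2) else 1 / 2).

(* A normal vector of C at the finite point x (meaningful when x is on C). *)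
Definition normal (C : ocircle) (x : pt) : pt :=
  match C with
  | OCirc c _ => sub x c
  | OLine h _ => h
  end.

Definition pt_of (p : ept) : pt := match p with Some x => x | None => (0, 0) end.

(* C and C' meet orthogonally at p (at infinity both are lines, and the
   angle is that between their normals). *)
Definition ortho_at (C C' : ocircle) (p : ept) : Prop :=
  on C p /\ on C' p /\ dot (normal C (pt_of p)) (normal C' (pt_of p)) = 0.

Definition tangency_point (D : config) (p : ept) : Prop :=
  exists i j : 'I_4, i != j /\ tangent_at (D i) (D j) p.

End Descartes.

(* Augmented coordinates [w C] of oriented circles are unit vectors for the
   Lorentz form [lorentz].  Tangent circles have [lorentz = +-1], and disjoint
   interiors exclude [+1]; hence the Gram matrix of [W_D] is [2 Q_D].
   As [Dmx = - Q_D] and [Q_D^2 = 1], the rows of [Dmx W_D] have the same Gram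
   matrix, so they are again the coordinates of oriented circles.
   For a point p, the quadruple [f_i = power (w C_i) p] (zero iff p is on C_i,
   negative iff p is interior to C_i) satisfies the Descartes relation
   [2 sum f_i^2 = (sum f_i)^2], and the quadruple of the new circles is the
   dual [sum f / 2 - f_i].  Two zero entries of f force two zero entries of
   its dual, which transports the tangency points; the sign pattern of the
   dual transports the orientation; and [lorentz (w C_i) (w C_j^perp) = 0] for
   [i <> j] gives orthogonality. *)

From HB Require Import structures.
From mathcomp Require Import all_boot all_order all_algebra.
From mathcomp Require Import reals.
From mathcomp Require Import ring lra.
Set Implicit Arguments. Unset Strict Implicit. Unset Printing Implicit Defensive.
Import Order.TTheory GRing.Theory Num.Theory.
Local Open Scope ring_scope.

Definition o0 : 'I_4 := @Ordinal 4 0 isT.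
Definition o1 : 'I_4 := @Ordinal 4 1 isT.
Definition o2 : 'I_4 := @Ordinal 4 2 isT.
Definition o3 : 'I_4 := @Ordinal 4 3 isT.

Lemma ord4P (i : 'I_4) : [\/ i = o0, i = o1, i = o2 | i = o3].
Proof.
case: i => [[|[|[|[|n]]]] lt_i4] //.
- by apply: Or41; apply: val_inj.
- by apply: Or42; apply: val_inj.
- by apply: Or43; apply: val_inj.
- by apply: Or44; apply: val_inj.
Qed.

Ltac ord4_cases i := case: (ord4P i) => ->.

Lemma big_ord4 (M : nmodType) (F : 'I_4 -> M) :
  \sum_(j < 4) F j = F o0 + F o1 + F o2 + F o3.
Proof.
rewrite !big_ord_recr big_ord0 /= add0r.
by congr (_ + _ + _ + _); congr F; apply: val_inj.
Qed.

Definition distinct4 (i j k l : 'I_4) :=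
  [&& i != j, i != k, i != l, j != k, j != l & k != l].

Lemma distinct4_compl2 (i j : 'I_4) : i != j -> exists k l, distinct4 i j k l.
Proof.
ord4_cases i; ord4_cases j => // _.
all: first [ by exists o2, o3 | by exists o1, o3 | by exists o1, o2
           | by exists o0, o3 | by exists o0, o2 | by exists o0, o1 ].
Qed.

Lemma distinct4_compl1 (i k l : 'I_4) :
  i != k -> i != l -> k != l -> exists j, distinct4 i j k l.
Proof.
ord4_cases i; ord4_cases k => //; ord4_cases l => // _ _ _.
all: first [ by exists o0 | by exists o1 | by exists o2 | by exists o3 ].
Qed.

Lemma distinct4_swap (i j k l : 'I_4) : distinct4 i j k l -> distinct4 k l i j.
Proof. by ord4_cases i; ord4_cases j; ord4_cases k; ord4_cases l. Qed.

Lemma big_distinct4 (R : comNzRingType) (F : 'I_4 -> R) i j k l :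
  distinct4 i j k l -> \sum_m F m = F i + F j + F k + F l.
Proof.
rewrite big_ord4; ord4_cases i; ord4_cases j => //; ord4_cases k => //;
  ord4_cases l => // _.
all: ring.
Qed.

Section CurvatureCenterCoordinates.
Variable R : realType.
Implicit Types (C : ocircle R) (u w : 'rV[R]_4) (p q : ept R) (x c h : pt R) (r m : R).

Definition cobend w := w 0 o0.
Definition bend w := w 0 o1.
Definition bendx w := w 0 o2.
Definition bendy w := w 0 o3.

Lemma wvecE C :
  [/\ cobend (wvec C) = match C with OCirc c r => (dot c c - r ^+ 2) / r
                                    | OLine _ m => 2 * m end,
      bend (wvec C) = match C with OCirc _ r => 1 / r | OLine _ _ => 0 end,
      bendx (wvec C) = match C with OCirc c r => c.1 / r | OLine h _ => h.1 end
    & bendy (wvec C) = match C with OCirc c r => c.2 / r | OLine h _ => h.2 end].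
Proof. by case: C => [c r|h m]; rewrite /cobend /bend /bendx /bendy !mxE. Qed.

(* Twice the bilinear form of the inverse of the paper's [Q_W]; the augmented
   Euclidean Descartes theorem [W^T Q_D W = Q_W] becomes [gram W = 2 Q_D]. *)
Definition lorentz u w : R :=
  bendx u * bendx w + bendy u * bendy w - (cobend u * bend w + bend u * cobend w) / 2.

Lemma lorentzC u w : lorentz u w = lorentz w u.
Proof. by rewrite /lorentz; ring. Qed.

Lemma lorentz_wvec_self C : valid C -> lorentz (wvec C) (wvec C) = 1.
Proof.
rewrite /lorentz; case: (wvecE C) => -> -> -> ->.
case: C => [c r|h m] /= V; rewrite /dot in V *.
- by move/eqP: V => r0; field.
- by rewrite -V; ring.
Qed.

Lemma lorentz_reverse C C' :
  lorentz (wvec (reverse C)) (wvec (reverse C')) = lorentz (wvec C) (wvec C').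
Proof.
rewrite /lorentz; case: (wvecE (reverse C)) => -> -> -> ->.
case: (wvecE (reverse C')) => -> -> -> ->.
case: (wvecE C) => -> -> -> ->; case: (wvecE C') => -> -> -> ->.
case: C => [c r|h m]; case: C' => [c' r'|h' m'] /=;
  rewrite ?invrN ?mulrN ?mulNr ?sqrrN; ring.
Qed.

Lemma valid_reverse C : valid C -> valid (reverse C).
Proof.
case: C => [c r|h m] /= V.
- by move/eqP: V => V; apply/eqP; rewrite oppr_eq0.
- by rewrite -V /dot /=; ring.
Qed.

(* For a circle, [power w (Some x)] is the power of x with respect to the
   circle divided by its oriented radius. *)
Definition power w p : R :=
  match p with
  | Some x => cobend w + bend w * dot x x - 2 * (x.1 * bendx w + x.2 * bendy w)
  | None => bend w
  end.

Lemma powerB u w p : power (u - w) p = power u p - power w p.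
Proof. by rewrite /power /cobend /bend /bendx /bendy !mxE; case: p => [x|]; ring. Qed.

Lemma power_circ c r x : r != 0 ->
  power (wvec (OCirc c r)) (Some x) = (dot (sub x c) (sub x c) - r ^+ 2) / r.
Proof.
move=> r0; rewrite /power; case: (wvecE (OCirc c r)) => -> -> -> ->.
by rewrite /dot /sub /=; field.
Qed.

Lemma power_line h m x : power (wvec (OLine h m)) (Some x) = 2 * (m - dot x h).
Proof.
by rewrite /power; case: (wvecE (OLine h m)) => -> -> -> ->; rewrite /dot /=; ring.
Qed.

Lemma power_reverse C p : power (wvec (reverse C)) p = - power (wvec C) p.
Proof.
rewrite /power; case: (wvecE (reverse C)) => -> -> -> ->.
case: (wvecE C) => -> -> -> ->.
case: C => [c r|h m] /=; case: p => [x|] /=; rewrite ?invrN /dot; ring.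
Qed.

Lemma on_power C p : valid C -> on C p <-> power (wvec C) p = 0.
Proof.
case: C => [c r|h m] V; case: p => [x|]; rewrite [on _ _]/= [valid _]/= in V *.
- have r0 : r != 0 by apply/eqP.
  rewrite power_circ //; split => [->|/eqP]; first by rewrite subrr mul0r.
  by rewrite mulf_eq0 invr_eq0 (negbTE r0) orbF subr_eq0 => /eqP.
- rewrite /power; case: (wvecE (OCirc c r)) => _ -> _ _; split => // /eqP.
  by rewrite mul1r invr_eq0 => /eqP.
- rewrite power_line; split => [->|/eqP]; first by rewrite subrr mulr0.
  by rewrite mulf_eq0 pnatr_eq0 /= subr_eq0 eq_sym => /eqP.
- by rewrite /power; case: (wvecE (OLine h m)) => _ -> _ _.
Qed.

Lemma interior_power C x : valid C -> interior C x <-> power (wvec C) (Some x) < 0.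
Proof.
case: C => [c r|h m] V; rewrite [interior _ _]/= [valid _]/= in V *.
- have r0 : r != 0 by apply/eqP.
  have r2 : 0 < r ^+ 2 by rewrite exprn_even_gt0.
  rewrite power_circ //; set Q := dot _ _.
  have -> : (Q - r ^+ 2) / r = (Q - r ^+ 2) * r / r ^+ 2 by field.
  rewrite pmulr_llt0 ?invr_gt0 //; case: ifP => r_gt0.
  + by rewrite pmulr_llt0 // subr_lt0.
  + have r_lt0 : r < 0 by rewrite lt_neqAle r0 /= leNgt r_gt0.
    by rewrite nmulr_llt0 // subr_gt0.
- by rewrite power_line; split => H; nra.
Qed.

Lemma tangent_at_on C C' p : tangent_at C C' p -> on C p /\ on C' p.
Proof. by move=> T; apply/(T p). Qed.

Lemma tangent_at_uniq C C' p q : tangent_at C C' p -> on C q -> on C' q -> q = p.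
Proof. by move=> T Cq C'q; apply/(T q). Qed.

Lemma tangent_atC C C' p : tangent_at C C' p -> tangent_at C' C p.
Proof. by move=> T q; rewrite -(T q); split=> -[]. Qed.

Lemma lorentz_circ_circ c c' r r' : r != 0 -> r' != 0 ->
  lorentz (wvec (OCirc c r)) (wvec (OCirc c' r')) =
  (r ^+ 2 + r' ^+ 2 - dot (sub c c') (sub c c')) / (2 * r * r').
Proof.
move=> r0 r'0; rewrite /lorentz; case: (wvecE (OCirc c r)) => -> -> -> ->.
case: (wvecE (OCirc c' r')) => -> -> -> ->; rewrite /dot /sub /=.
by field; rewrite r0 r'0.
Qed.

Lemma lorentz_circ_line c r h m : r != 0 ->
  lorentz (wvec (OCirc c r)) (wvec (OLine h m)) = (dot c h - m) / r.
Proof.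
move=> r0; rewrite /lorentz; case: (wvecE (OCirc c r)) => -> -> -> ->.
by case: (wvecE (OLine h m)) => -> -> -> ->; rewrite /dot /=; field.
Qed.

Lemma lorentz_lines h m h' m' :
  lorentz (wvec (OLine h m)) (wvec (OLine h' m')) = dot h h'.
Proof.
rewrite /lorentz; case: (wvecE (OLine h m)) => -> -> -> ->.
by case: (wvecE (OLine h' m')) => -> -> -> ->; rewrite /dot /=; ring.
Qed.

(* Reflecting x in the line of centres gives a second common point unless
   x lies on that line; for concentric circles the antipode of x does. *)
Lemma tangent_circles_collinear c c' r r' x : r != 0 ->
  tangent_at (OCirc c r) (OCirc c' r') (Some x) ->
  exists t, x.1 - c.1 = t * (c'.1 - c.1) /\ x.2 - c.2 = t * (c'.2 - c.2).
Proof.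
case: x => x1 x2 r0 T; have [/= hx hx'] := tangent_at_on T; rewrite /=.
set u1 := c'.1 - c.1; set u2 := c'.2 - c.2; set d := u1 ^+ 2 + u2 ^+ 2.
have [d0|d_neq0] := eqVneq d 0.
- move: d0; rewrite /d => d0.
  have u10 : u1 = 0 by nra.
  have u20 : u2 = 0 by nra.
  have e1 : c'.1 = c.1 by rewrite -[c'.1](subrK c.1) -/u1 u10 add0r.
  have e2 : c'.2 = c.2 by rewrite -[c'.2](subrK c.2) -/u2 u20 add0r.
  have [q1 q2] : Some (2 * c.1 - x1, 2 * c.2 - x2) = Some (x1, x2).
    apply: (tangent_at_uniq T) => /=.
    + by rewrite -hx /dot /sub /=; ring.
    + by rewrite -hx' /dot /sub /= e1 e2; ring.
  have xc1 : x1 - c.1 = 0 by lra.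
  have xc2 : x2 - c.2 = 0 by lra.
  have : r ^+ 2 = 0 by rewrite -hx /dot /sub /= xc1 xc2; ring.
  by move/eqP; rewrite expf_eq0 /= (negbTE r0).
- pose t := ((x1 - c.1) * u1 + (x2 - c.2) * u2) / d.
  have [q1 q2] : Some (c.1 + 2 * t * u1 - (x1 - c.1), c.2 + 2 * t * u2 - (x2 - c.2))
      = Some (x1, x2).
    apply: (tangent_at_uniq T) => /=.
    + by rewrite -hx /dot /sub /t /d /=; field.
    + rewrite -hx' /dot /sub /t /=.
      have -> : c'.1 = c.1 + u1 by rewrite /u1; ring.
      have -> : c'.2 = c.2 + u2 by rewrite /u2; ring.
      by rewrite -/u1 -/u2 /d; field.
  by exists t; split; lra.
Qed.

Lemma tangent_circles_lorentz c c' r r' p : r != 0 -> r' != 0 ->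
  tangent_at (OCirc c r) (OCirc c' r') p ->
  lorentz (wvec (OCirc c r)) (wvec (OCirc c' r')) ^+ 2 = 1.
Proof.
move=> r0 r'0 T; case: p T => [x T|/tangent_at_on [] //].
have [/= hx hx'] := tangent_at_on T.
have [t [e1 e2]] := tangent_circles_collinear r0 T.
set d := (c'.1 - c.1) ^+ 2 + (c'.2 - c.2) ^+ 2.
have Ed : dot (sub c c') (sub c c') = d by rewrite /dot /sub /d /=; ring.
have ex1 : x.1 = c.1 + t * (c'.1 - c.1) by lra.
have ex2 : x.2 = c.2 + t * (c'.2 - c.2) by lra.
have hr : r ^+ 2 = t ^+ 2 * d by rewrite -hx /dot /sub /= ex1 ex2 /d; ring.
have hr' : r' ^+ 2 = (t - 1) ^+ 2 * d by rewrite -hx' /dot /sub /= ex1 ex2 /d; ring.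
rewrite lorentz_circ_circ // Ed; apply/eqP; rewrite -subr_eq0; apply/eqP.
have -> : ((r ^+ 2 + r' ^+ 2 - d) / (2 * r * r')) ^+ 2 - 1 =
    ((r ^+ 2 + r' ^+ 2 - d) ^+ 2 - 4 * r ^+ 2 * r' ^+ 2) / (4 * r ^+ 2 * r' ^+ 2).
  by field; rewrite r0 r'0.
rewrite hr hr'.
have -> : (t ^+ 2 * d + (t - 1) ^+ 2 * d - d) ^+ 2 - 4 * (t ^+ 2 * d) * ((t - 1) ^+ 2 * d)
  = 0 by ring.
by rewrite mul0r.
Qed.

(* Reflecting x in the normal line through c gives a second common point
   unless x lies on that normal line. *)
Lemma tangent_circle_line_normal c r h m x : dot h h = 1 ->
  tangent_at (OCirc c r) (OLine h m) (Some x) ->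
  (x.1 - c.1) * h.2 = (x.2 - c.2) * h.1.
Proof.
case: x => x1 x2 hh T; have [/= hx hl] := tangent_at_on T; rewrite /=.
pose s := (x2 - c.2) * h.1 - (x1 - c.1) * h.2.
have [q1 q2] : Some (x1 + 2 * s * h.2, x2 - 2 * s * h.1) = Some (x1, x2).
  apply: (tangent_at_uniq T) => /=; last by rewrite -hl /dot /=; ring.
  rewrite -hx; apply/eqP; rewrite -subr_eq0; apply/eqP.
  by transitivity (4 * s ^+ 2 * (dot h h - 1)); [rewrite /dot /sub /s /=; ring
                                                 | rewrite hh subrr mulr0].
have s0 : s = 0.
  have sh1 : s * h.1 = 0 by lra.
  have sh2 : s * h.2 = 0 by lra.
  have : s * dot h h = 0 by rewrite /dot mulrDr !mulrA sh1 sh2 !mul0r addr0.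
  by rewrite hh mulr1.
by move: s0; rewrite /s => /eqP; rewrite subr_eq0 eq_sym => /eqP.
Qed.

Lemma tangent_circle_line_lorentz c r h m p : r != 0 -> dot h h = 1 ->
  tangent_at (OCirc c r) (OLine h m) p ->
  lorentz (wvec (OCirc c r)) (wvec (OLine h m)) ^+ 2 = 1.
Proof.
move=> r0 hh T; case: p T => [x T|/tangent_at_on [] //].
have [/= hx hl] := tangent_at_on T.
have Hn := tangent_circle_line_normal hh T.
rewrite lorentz_circ_line //.
have Lagrange : (dot c h - dot x h) ^+ 2 =
    dot (sub x c) (sub x c) * dot h h - ((x.1 - c.1) * h.2 - (x.2 - c.2) * h.1) ^+ 2.
  by rewrite /dot /sub /=; ring.
rewrite expr_div_n -hl Lagrange hh mulr1 Hn subrr expr0n subr0 hx.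
by rewrite divff // expf_neq0.
Qed.

Lemma tangent_lines_lorentz h m h' m' p : dot h h = 1 -> dot h' h' = 1 ->
  tangent_at (OLine h m) (OLine h' m') p ->
  lorentz (wvec (OLine h m)) (wvec (OLine h' m')) ^+ 2 = 1.
Proof.
move=> hh hh' T; rewrite lorentz_lines.
pose del := h.1 * h'.2 - h.2 * h'.1.
have del0 : del = 0.
  apply/eqP; apply: contraT => del_neq0.
  pose x : pt R := ((m * h'.2 - m' * h.2) / del, (h.1 * m' - h'.1 * m) / del).
  have xp : Some x = p by apply: (tangent_at_uniq T); rewrite /= /dot /x /del /=; field.
  have nonep : None = p by apply: (tangent_at_uniq T).
  by rewrite -nonep in xp.
have -> : dot h h' ^+ 2 = dot h h * dot h' h' - del ^+ 2 by rewrite /dot /del; ring.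
by rewrite del0 hh hh' mulr1 expr0n /= subr0.
Qed.

Lemma tangent_lorentz C C' p : valid C -> valid C' -> tangent_at C C' p ->
  lorentz (wvec C) (wvec C') ^+ 2 = 1.
Proof.
case: C => [c r|h m]; case: C' => [c' r'|h' m'] /= V V' T.
- by apply: tangent_circles_lorentz T; apply/eqP.
- by apply: tangent_circle_line_lorentz T; first apply/eqP.
- by rewrite lorentzC; apply: tangent_circle_line_lorentz (tangent_atC T); first apply/eqP.
- exact: tangent_lines_lorentz T.
Qed.

Lemma interior_reverse_power C x : valid C ->
  interior (reverse C) x <-> 0 < power (wvec C) (Some x).
Proof. by move/valid_reverse/(interior_power x); rewrite power_reverse oppr_lt0. Qed.

Lemma lorentz_self_exists_power_lt0 w :
  lorentz w w = 1 -> exists x, power w (Some x) < 0.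
Proof.
rewrite /lorentz /power /dot => Hw.
set a := cobend w in Hw *; set b := bend w in Hw *.
set X := bendx w in Hw *; set Y := bendy w in Hw *.
have [b_lt0|b_gt0|b0] := ltgtP b 0.
- exists ((X + 2) / b, Y / b) => /=.
  have -> : a + b * ((X + 2) / b * ((X + 2) / b) + Y / b * (Y / b)) -
      2 * ((X + 2) / b * X + Y / b * Y) = (a * b + 4 - (X * X + Y * Y)) / b.
    by field; rewrite lt_eqF.
  by rewrite (_ : a * b + 4 - _ = 3) ?pmulr_rlt0 ?invr_lt0 //; lra.
- exists (X / b, Y / b) => /=.
  have -> : a + b * (X / b * (X / b) + Y / b * (Y / b)) -
      2 * (X / b * X + Y / b * Y) = (a * b - (X * X + Y * Y)) / b.
    by field; rewrite gt_eqF.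
  by rewrite (_ : a * b - _ = -1) ?mulN1r ?oppr_lt0 ?invr_gt0 //; lra.
- exists ((a / 2 + 1) * X, (a / 2 + 1) * Y) => /=.
  rewrite b0 in Hw *.
  have E : X * X + Y * Y = 1 by lra.
  have E2 : a * (X * X + Y * Y) = a by rewrite E mulr1.
  nra.
Qed.

Lemma lorentzBB u w :
  lorentz (u - w) (u - w) = lorentz u u + lorentz w w - 2 * lorentz u w.
Proof. by rewrite /lorentz /cobend /bend /bendx /bendy !mxE; ring. Qed.

(* [bend n * power n] is a sum of two squares. *)
Lemma isotropic_power_sign n : lorentz n n = 0 ->
  (forall x, 0 <= power n (Some x)) \/ (forall x, power n (Some x) <= 0).
Proof.
rewrite /lorentz /power => null.
set a := cobend n in null *; set b := bend n in null *.
set X := bendx n in null *; set Y := bendy n in null *.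
have Esq x : b * (a + b * dot x x - 2 * (x.1 * X + x.2 * Y)) =
    (b * x.1 - X) ^+ 2 + (b * x.2 - Y) ^+ 2.
  apply/eqP; rewrite -subr_eq0; apply/eqP; rewrite /dot.
  by transitivity (-(X * X + Y * Y - (a * b + b * a) / 2)); [field | rewrite null oppr0].
have sq_ge0 x : 0 <= b * (a + b * dot x x - 2 * (x.1 * X + x.2 * Y)).
  by rewrite Esq addr_ge0 ?sqr_ge0.
have [b_lt0|b_gt0|b0] := ltgtP b 0.
- by right=> x; have := sq_ge0 x; rewrite nmulr_rge0.
- by left=> x; have := sq_ge0 x; rewrite pmulr_rge0.
- rewrite b0 in null *.
  have X0 : X = 0 by nra.
  have Y0 : Y = 0 by nra.
  rewrite X0 Y0; have [a_ge0|a_lt0] := leP 0 a; [left|right] => x; lra.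
Qed.

Lemma lorentz1_interiors_meet u w :
  lorentz u u = 1 -> lorentz w w = 1 -> lorentz u w = 1 ->
  exists x, power u (Some x) < 0 /\ power w (Some x) < 0.
Proof.
move=> Hu Hw Huw.
have null : lorentz (u - w) (u - w) = 0 by rewrite lorentzBB Hu Hw Huw; ring.
case: (isotropic_power_sign null) => sign.
- have [x Hx] := lorentz_self_exists_power_lt0 Hu; exists x; split=> //.
  by have := sign x; rewrite powerB; lra.
- have [x Hx] := lorentz_self_exists_power_lt0 Hw; exists x; split=> //.
  by have := sign x; rewrite powerB; lra.
Qed.

Lemma lorentz0_ortho_at C C' p : valid C -> valid C' -> on C p -> on C' p ->
  lorentz (wvec C) (wvec C') = 0 -> ortho_at C C' p.
Proof.
move=> V V' H H' HB; do 2!split=> //.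
case: C V H HB => [c r|h m]; case: C' V' H' => [c' r'|h' m'] /= V' H' V H HB.
- move/eqP: V => r0; move/eqP: V' => r'0; case: p H H' => [x|] //= H H'.
  have den : 2 * r * r' != 0 by rewrite !mulf_neq0 ?pnatr_eq0.
  move: HB; rewrite lorentz_circ_circ // => /eqP.
  rewrite mulf_eq0 invr_eq0 (negbTE den) orbF.
  have -> : dot (sub x c) (sub x c') =
      (dot (sub x c) (sub x c) + dot (sub x c') (sub x c') - dot (sub c c') (sub c c')) / 2.
    by rewrite /dot /sub /=; field.
  by rewrite H H' => /eqP ->; rewrite mul0r.
- move/eqP: V => r0; case: p H H' => [x|] //= H H'.
  move: HB; rewrite lorentz_circ_line // => /eqP.
  rewrite mulf_eq0 invr_eq0 (negbTE r0) orbF subr_eq0 => /eqP hc.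
  have -> : dot (sub x c) h' = dot x h' - dot c h' by rewrite /dot /sub /=; ring.
  by rewrite H' hc subrr.
- move/eqP: V' => r'0; case: p H H' => [x|] //= H H'.
  move: HB; rewrite lorentzC lorentz_circ_line // => /eqP.
  rewrite mulf_eq0 invr_eq0 (negbTE r'0) orbF subr_eq0 => /eqP hc.
  have -> : dot h (sub x c') = dot x h - dot c' h by rewrite /dot /sub /=; ring.
  by rewrite H hc subrr.
- by rewrite -(lorentz_lines h m h' m') HB.
Qed.

Definition circle_of w : ocircle R :=
  if bend w == 0 then OLine (bendx w, bendy w) (cobend w / 2)
  else OCirc (bendx w / bend w, bendy w / bend w) (1 / bend w).

Lemma circle_ofK w : lorentz w w = 1 -> wvec (circle_of w) = w /\ valid (circle_of w).
Proof.
rewrite /lorentz /circle_of => Hw; case: eqP => [b0|/eqP b_neq0].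
- rewrite b0 in Hw; split; last by rewrite /= /dot /=; lra.
  apply/rowP => k; ord4_cases k; rewrite !mxE //=.
  by rewrite /cobend; field.
- split; last by rewrite /= div1r; apply/eqP; rewrite invr_eq0.
  apply/rowP => k; ord4_cases k; rewrite !mxE /=.
  + rewrite -[RHS]/(cobend w) /dot /=.
    have -> : bendx w / bend w * (bendx w / bend w) + bendy w / bend w * (bendy w / bend w) -
        (1 / bend w) ^+ 2 = (bendx w * bendx w + bendy w * bendy w - 1) / bend w ^+ 2.
      by field.
    by rewrite (_ : _ - 1 = cobend w * bend w); [field | lra].
  + by rewrite /bend; field.
  + by rewrite /bendx; field.
  + by rewrite /bendy; field.
Qed.

End CurvatureCenterCoordinates.

Section DescartesQuadruples.
Variable R : realFieldType.
Implicit Types f : 'I_4 -> R.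

Definition descartes_rel f := 2 * \sum_i f i ^+ 2 = (\sum_i f i) ^+ 2.

Definition dual f i := (\sum_j f j) / 2 - f i.

Lemma sum_dual f : \sum_i dual f i = \sum_i f i.
Proof. by rewrite /dual !big_ord4; field. Qed.

Lemma dualK f i : dual (dual f) i = f i.
Proof. by rewrite {1}/dual sum_dual /dual; field. Qed.

Lemma dualN f i : dual (fun j => - f j) i = - dual f i.
Proof. by rewrite /dual !big_ord4; field. Qed.

Lemma descartes_rel_dual f : descartes_rel f -> descartes_rel (dual f).
Proof.
by rewrite /descartes_rel sum_dual => <-; rewrite /dual !big_ord4; field.
Qed.

Lemma descartes_relN f : descartes_rel f -> descartes_rel (fun i => - f i).
Proof. by rewrite /descartes_rel !big_ord4 => E; rewrite !sqrrN -opprD -!opprD sqrrN. Qed.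

(* Two vanishing entries force [(f i - f j)^2 = 0] for the other two. *)
Lemma dual_eq0 f i k l : descartes_rel f -> f k = 0 -> f l = 0 ->
  i != k -> i != l -> k != l -> dual f i = 0.
Proof.
move=> E fk fl ik il kl; have [j D] := distinct4_compl1 ik il kl.
move: E; rewrite /descartes_rel /dual (big_distinct4 f D).
by rewrite (big_distinct4 (fun m => f m ^+ 2) D) fk fl => E; nra.
Qed.

Lemma dual_eq0_sum f i : f i = 0 -> dual f i = 0 -> \sum_j f j = 0.
Proof. by rewrite /dual => ->; lra. Qed.

Lemma descartes_rel_sum0 f i : descartes_rel f -> \sum_j f j = 0 -> f i = 0.
Proof.
rewrite /descartes_rel => + S; rewrite S big_ord4 expr0n /= => E.
have E' : f o0 ^+ 2 + f o1 ^+ 2 + f o2 ^+ 2 + f o3 ^+ 2 = 0 by lra.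
by ord4_cases i; nra.
Qed.

Lemma descartes_rel_two_neg_sum (u v w t : R) :
  2 * (u ^+ 2 + v ^+ 2 + w ^+ 2 + t ^+ 2) = (u + v + w + t) ^+ 2 ->
  0 <= u -> 0 <= v -> 0 <= w -> t + w < 0 -> False.
Proof.
move=> E hu hv hw htw.
have h1 : (u + v + w - t) ^+ 2 = 4 * (u * v + v * w + w * u) by nra.
have h2 : (u + v + 2 * w) ^+ 2 < (u + v + w - t) ^+ 2.
  by rewrite -subr_gt0 subr_sqr; apply: mulr_gt0; lra.
have h3 : 0 <= (u - v) ^+ 2 + 4 * w ^+ 2 by rewrite addr_ge0 ?sqr_ge0 ?mulr_ge0 ?sqr_ge0.
nra.
Qed.

(* If no two of a, b, c, d are negative but two dual entries are, then
   c + d < 0, so exactly one of c, d is negative. *)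
Lemma descartes_rel4_dual_neg (a b c d : R) :
  2 * (a ^+ 2 + b ^+ 2 + c ^+ 2 + d ^+ 2) = (a + b + c + d) ^+ 2 ->
  ~ (a < 0 /\ b < 0) -> ~ (a < 0 /\ c < 0) -> ~ (a < 0 /\ d < 0) ->
  ~ (b < 0 /\ c < 0) -> ~ (b < 0 /\ d < 0) -> ~ (c < 0 /\ d < 0) ->
  (a + b + c + d) / 2 - a < 0 -> (a + b + c + d) / 2 - b < 0 -> False.
Proof.
move=> E nab nac nad nbc nbd ncd ha hb.
have nonneg (x y : R) : x < 0 -> ~ (y < 0 /\ x < 0) -> 0 <= y.
  by move=> hx nyx; rewrite leNgt; apply/negP => hy; apply: nyx.
have [hc|hc] := ltP c 0.
- apply: (@descartes_rel_two_neg_sum a b d c); first by nra.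
  + exact: nonneg hc nac.
  + exact: nonneg hc nbc.
  + exact: nonneg hc (fun '(conj hd hc) => ncd (conj hc hd)).
  + lra.
- have hd : d < 0 by lra.
  apply: (@descartes_rel_two_neg_sum a b c d); first by nra.
  + exact: nonneg hd nad.
  + exact: nonneg hd nbd.
  + by [].
  + lra.
Qed.

Lemma dual_no_two_neg f : descartes_rel f ->
  (forall i j, i != j -> ~ (f i < 0 /\ f j < 0)) ->
  forall i j, i != j -> ~ (dual f i < 0 /\ dual f j < 0).
Proof.
move=> E H i j ij [hi hj]; have [k [l D]] := distinct4_compl2 ij.
move: (D) => /and5P [d1 d2 d3 d4 /andP [d5 d6]].
move: E hi hj; rewrite /descartes_rel /dual (big_distinct4 f D).
rewrite (big_distinct4 (fun m => f m ^+ 2) D) => E hi hj.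
by apply: (descartes_rel4_dual_neg E _ _ _ _ _ _ hi hj); apply: H; rewrite // eq_sym.
Qed.

Lemma dual_no_two_pos f : descartes_rel f ->
  (forall i j, i != j -> ~ (0 < f i /\ 0 < f j)) ->
  forall i j, i != j -> ~ (0 < dual f i /\ 0 < dual f j).
Proof.
move=> E H i j ij [hi hj].
apply: (dual_no_two_neg (descartes_relN E) _ ij); last by rewrite !dualN !oppr_lt0.
by move=> a b ab; rewrite !oppr_lt0; apply: H.
Qed.

End DescartesQuadruples.

Section DescartesForm.
Variable R : realType.
Implicit Types (W : 'M[R]_4) (w : 'rV[R]_4) (p : ept R).

Definition lorentz_mx : 'M[R]_4 := \matrix_(k, l)
  nth 0 (nth [::] [:: [:: 0; -1/2; 0; 0]; [:: -1/2; 0; 0; 0];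
                      [:: 0; 0; 1; 0]; [:: 0; 0; 0; 1]] k) l.

Lemma lorentz_mxE m n (A : 'M[R]_(m, 4)) (C : 'M[R]_(n, 4)) i j :
  (A *m lorentz_mx *m C^T) i j = lorentz (row i A) (row j C).
Proof.
rewrite !mxE big_ord4 !mxE !big_ord4 !mxE.
by rewrite /lorentz /cobend /bend /bendx /bendy !mxE /=; field.
Qed.

Lemma tr_lorentz_mx : lorentz_mx^T = lorentz_mx.
Proof. by apply/matrixP => i j; rewrite !mxE; ord4_cases i; ord4_cases j. Qed.

Definition gram W := W *m lorentz_mx *m W^T.

Lemma gramP W :
  (forall i j, lorentz (row i W) (row j W) = if i == j then 1 else -1) ->
  gram W = 2 *: QD R.
Proof.
move=> HW; apply/matrixP => i j; rewrite lorentz_mxE HW !mxE.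
by case: eqP => _ /=; field.
Qed.

Lemma QD_invol : QD R *m QD R = 1%:M.
Proof.
apply/matrixP => i j; rewrite !mxE big_ord4 !mxE.
by ord4_cases i; ord4_cases j; rewrite /=; field.
Qed.

Lemma Dmx_QD : Dmx R = - QD R.
Proof. by apply/matrixP => i j; rewrite !mxE; case: eqP => _ /=; field. Qed.

Lemma tr_Dmx : (Dmx R)^T = Dmx R.
Proof. by apply/matrixP => i j; rewrite !mxE eq_sym. Qed.

Lemma AutQD_Dmx : AutQD (Dmx R).
Proof. by rewrite /AutQD tr_Dmx Dmx_QD mulNmx mulmxN mulNmx opprK QD_invol mul1mx. Qed.

Lemma gram_Dmx W : gram W = 2 *: QD R -> gram (Dmx R *m W) = 2 *: QD R.
Proof.
move=> GW; have -> : gram (Dmx R *m W) = Dmx R *m gram W *m Dmx R.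
  by rewrite /gram trmx_mul tr_Dmx !mulmxA.
rewrite GW Dmx_QD mulNmx mulmxN mulNmx opprK -scalemxAr -scalemxAl QD_invol.
by rewrite mul1mx.
Qed.

(* [-2] times the augmented coordinates of p seen as a circle of radius 0,
   i.e. the limit of [- 2 * r *: wvec (OCirc x r)] as [r -> 0]. *)
Definition pointvec p : 'rV[R]_4 := \row_k
  nth 0 (match p with Some x => [:: -2 * dot x x; -2; -2 * x.1; -2 * x.2]
                    | None => [:: -2; 0; 0; 0] end) k.

Lemma power_lorentz w p : power w p = lorentz w (pointvec p).
Proof.
rewrite /power /lorentz /cobend /bend /bendx /bendy !mxE.
by case: p => [x|] /=; rewrite /dot; field.
Qed.

Lemma lorentz_pointvec p : lorentz (pointvec p) (pointvec p) = 0.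
Proof.
rewrite /lorentz /cobend /bend /bendx /bendy !mxE.
by case: p => [x|] /=; rewrite /dot; field.
Qed.

Lemma QD_quadratic (v : 'cV[R]_4) :
  (v^T *m QD R *m v) 0 0 = \sum_i v i 0 ^+ 2 - (\sum_i v i 0) ^+ 2 / 2.
Proof. by rewrite !mxE !big_ord4 !mxE !big_ord4 !mxE /=; field. Qed.

(* The powers of p are the entries of [Phi = W L n^T] with [n = pointvec p];
   W is invertible with [L (W^T Q_D W) = 2], so [Phi^T Q_D Phi = 2 n L n^T = 0]. *)
Lemma gram_descartes_rel W p :
  gram W = 2 *: QD R -> descartes_rel (fun i => power (row i W) p).
Proof.
move=> GW; set n := pointvec p.
have two_neq0 : (2 : R) != 0 by rewrite pnatr_eq0.
have WK : W *m (2^-1 *: (lorentz_mx *m W^T *m QD R)) = 1%:M.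
  by rewrite -scalemxAr !mulmxA -/(gram W) GW -scalemxAl QD_invol scalerA mulVf
    ?scale1r.
have LK : lorentz_mx *m (W^T *m QD R *m W) = 2%:M.
  rewrite -scalemx1 -(mulmx1C WK) -scalemxAl scalerA mulfV // scale1r.
  by rewrite !mulmxA.
pose Phi := W *m lorentz_mx *m n^T.
have PhiE i : Phi i 0 = power (row i W) p.
  by rewrite lorentz_mxE power_lorentz; congr lorentz; apply/rowP => k; rewrite !mxE.
have : (Phi^T *m QD R *m Phi) 0 0 = 0.
  have -> : Phi^T *m QD R *m Phi =
      n *m (lorentz_mx *m (W^T *m QD R *m W)) *m lorentz_mx *m n^T.
    by rewrite /Phi !trmx_mul trmxK tr_lorentz_mx !mulmxA.
  rewrite LK mul_mx_scalar -!scalemxAl mxE lorentz_mxE.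
  have -> : row 0 n = n by apply/rowP => k; rewrite !mxE.
  by rewrite lorentz_pointvec mulr0.
rewrite QD_quadratic /descartes_rel.
under eq_bigr => i _ do rewrite PhiE.
under [in X in X ^+ 2]eq_bigr => i _ do rewrite PhiE.
by move/eqP; rewrite subr_eq0 => /eqP ->; field.
Qed.

Lemma Dmx_mulE W i l : (Dmx R *m W) i l = (\sum_j W j l) / 2 - W i l.
Proof. by rewrite mxE !big_ord4 !mxE; ord4_cases i; rewrite /=; field. Qed.

Lemma power_Dmx W i p :
  power (row i (Dmx R *m W)) p = dual (fun j => power (row j W) p) i.
Proof.
rewrite /dual /power /cobend /bend /bendx /bendy ![row _ _ _ _]mxE !Dmx_mulE.
rewrite !big_ord4 ![row _ _ _ _]mxE.
by case: p => [x|]; field.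
Qed.

Lemma lorentz_row_Dmx W i j : gram W = 2 *: QD R ->
  lorentz (row i W) (row j (Dmx R *m W)) = if i == j then -2 else 0.
Proof.
move=> GW; rewrite -lorentz_mxE trmx_mul tr_Dmx mulmxA -/(gram W) GW Dmx_QD mulmxN.
rewrite -scalemxAl QD_invol !mxE; case: eqP => _ /=; ring.
Qed.

Lemma lorentz_Dmx_self W i : gram W = 2 *: QD R ->
  lorentz (row i (Dmx R *m W)) (row i (Dmx R *m W)) = 1.
Proof. by move/gram_Dmx=> G; rewrite -lorentz_mxE -/(gram _) G !mxE eqxx /=; field. Qed.

End DescartesForm.

Lemma row_Wmx (R : realType) (D : config R) i : row i (Wmx D) = wvec (D i).
Proof. by apply/rowP => k; rewrite !mxE. Qed.

Lemma interiors_disjoint_lorentz_neq1 (R : realType) (C C' : ocircle R) :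
  valid C -> valid C' -> (forall x, ~ (interior C x /\ interior C' x)) ->
  lorentz (wvec C) (wvec C') != 1.
Proof.
move=> V V' disj; apply/eqP => B1.
have [x [hx hx']] := lorentz1_interiors_meet (lorentz_wvec_self V) (lorentz_wvec_self V') B1.
by apply: (disj x); split; apply/interior_power.
Qed.

Lemma oriented_descartes_gram (R : realType) (D : config R) :
  oriented_descartes D -> gram (Wmx D) = 2 *: QD R.
Proof.
move=> [[V [T _]] O]; apply: gramP => i j; rewrite !row_Wmx.
case: eqP => [<-|/eqP ij]; first exact: lorentz_wvec_self.
have [p Tp] := T i j ij; move/eqP: (tangent_lorentz (V i) (V j) Tp).
rewrite sqrf_eq1 => /orP [/eqP B1|/eqP //]; exfalso; move: B1; apply/eqP.
case: O => disj.
- exact: interiors_disjoint_lorentz_neq1 (V i) (V j) (disj i j ij).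
- rewrite -lorentz_reverse.
  exact: interiors_disjoint_lorentz_neq1 (valid_reverse (V i)) (valid_reverse (V j))
    (disj i j ij).
Qed.

Lemma descartes_tangent_at (R : realType) (D : config R) i j p : descartes D ->
  i != j -> on (D i) p -> on (D j) p -> tangent_at (D i) (D j) p.
Proof.
move=> [_ [T _]] ij hi hj; have [p' Tp'] := T i j ij.
by rewrite (tangent_at_uniq Tp' hi hj).
Qed.

Lemma descartes_no_common_point (R : realType) (D : config R) p : descartes D ->
  ~ (forall m, on (D m) p).
Proof.
move=> descD H; have [_ [_ Dist]] := descD.
have T01 := descartes_tangent_at (i:=o0) (j:=o1) descD isT (H o0) (H o1).
have T23 := descartes_tangent_at (i:=o2) (j:=o3) descD isT (H o2) (H o3).
by have := Dist o0 o1 o2 o3 p isT isT T01 T23.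
Qed.

Section DualConfiguration.
Variable R : realType.
Variable D : config R.
Hypothesis descD : descartes D.
Hypothesis gramD : gram (Wmx D) = 2 *: QD R.

Definition dual_config : config R := fun i => circle_of (row i (Dmx R *m Wmx D)).

Let validD i : valid (D i). Proof. by case: descD. Qed.

Lemma wvec_dual_config i : wvec (dual_config i) = row i (Dmx R *m Wmx D).
Proof. exact: (circle_ofK (lorentz_Dmx_self i gramD)).1. Qed.

Lemma valid_dual_config i : valid (dual_config i).
Proof. exact: (circle_ofK (lorentz_Dmx_self i gramD)).2. Qed.

Lemma Wmx_dual_config : Dmx R *m Wmx D = Wmx dual_config.
Proof. by apply/matrixP => k l; rewrite [RHS]mxE wvec_dual_config [RHS]mxE. Qed.

Let F p j := power (row j (Wmx D)) p.

Lemma descartes_rel_power p : descartes_rel (F p).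
Proof. exact: gram_descartes_rel. Qed.

Lemma on_config j p : on (D j) p <-> F p j = 0.
Proof. by rewrite /F row_Wmx; apply: on_power. Qed.

Lemma power_dual_config j p : power (wvec (dual_config j)) p = dual (F p) j.
Proof. by rewrite wvec_dual_config power_Dmx. Qed.

Lemma on_dual_config j p : on (dual_config j) p <-> dual (F p) j = 0.
Proof. by rewrite -power_dual_config; apply: on_power; apply: valid_dual_config. Qed.

Lemma interior_config a x : interior (D a) x <-> F (Some x) a < 0.
Proof. by rewrite /F row_Wmx; apply: interior_power. Qed.

Lemma interior_reverse_config a x : interior (reverse (D a)) x <-> 0 < F (Some x) a.
Proof. by rewrite /F row_Wmx; apply: interior_reverse_power. Qed.

Let power_sum_neq0 p : \sum_j F p j = 0 -> False.
Proof.
move=> S0; apply: (descartes_no_common_point (p := p) descD) => m.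
by apply/on_config; apply: (descartes_rel_sum0 _ (descartes_rel_power p) S0).
Qed.

Lemma dual_config_tangent i j k l p : distinct4 i j k l ->
  tangent_at (D k) (D l) p -> tangent_at (dual_config i) (dual_config j) p.
Proof.
move=> Dd T q; move: (Dd) => /and5P [ij ik il jk /andP [jl kl]].
split=> [[/on_dual_config hi /on_dual_config hj]|->].
- have E := descartes_rel_dual (descartes_rel_power q).
  apply: (tangent_at_uniq T); apply/on_config; rewrite -dualK.
  + by apply: (dual_eq0 E hi hj); rewrite // eq_sym.
  + by apply: (dual_eq0 E hi hj); rewrite // eq_sym.
- have [/on_config hk /on_config hl] := tangent_at_on T.
  by split; apply/on_dual_config; apply: (dual_eq0 (descartes_rel_power p) hk hl).
Qed.

Lemma dual_config_no_triple_point a b c p : a != b -> a != c -> b != c ->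
  on (dual_config a) p -> on (dual_config b) p -> on (dual_config c) p -> False.
Proof.
move=> ab ac bc /on_dual_config ha /on_dual_config hb /on_dual_config hc.
have Fc : F p c = 0.
  rewrite -dualK; apply: (dual_eq0 (descartes_rel_dual (descartes_rel_power p)) ha hb);
  by rewrite // eq_sym.
exact: power_sum_neq0 (dual_eq0_sum Fc hc).
Qed.

Lemma descartes_dual_config : descartes dual_config.
Proof.
have [_ [T _]] := descD.
split; first exact: valid_dual_config.
split=> [i j ij|i j k l p ij kl Ti Tk].
- have [k [l Dd]] := distinct4_compl2 ij.
  move: (Dd) => /and5P [_ _ _ _ /andP [_ kl]].
  have [p Tp] := T k l kl; exists p; exact: dual_config_tangent Dd Tp.
- have [hi hj] := tangent_at_on Ti; have [hk hl] := tangent_at_on Tk.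
  have [eik|ik] := eqVneq i k.
  + subst k; have [->|jl] := eqVneq j l; first by rewrite ?eqxx.
    by case: (dual_config_no_triple_point ij kl jl hi hj hl).
  + have [eil|il] := eqVneq i l.
    * subst l; have [->|jk] := eqVneq j k; first by rewrite ?eqxx ?orbT.
      by case: (dual_config_no_triple_point ij ik jk hi hj hk).
    * by case: (dual_config_no_triple_point ik il kl hi hk hl).
Qed.

Lemma oriented_descartes_dual_config :
  oriented_descartes D -> oriented_descartes dual_config.
Proof.
move=> [_ O]; split; first exact: descartes_dual_config.
have E x := descartes_rel_power (Some x).
case: O => disj; [left|right] => i j ij x.
- rewrite !(interior_power _ (valid_dual_config _)) !power_dual_config.
  apply: (dual_no_two_neg (E x) _ ij) => a b ab.
  by rewrite -!interior_config; apply: disj.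
- rewrite !(interior_reverse_power _ (valid_dual_config _)) !power_dual_config.
  apply: (dual_no_two_pos (E x) _ ij) => a b ab.
  by rewrite -!interior_reverse_config; apply: disj.
Qed.

Lemma tangency_point_dual_config p :
  tangency_point D p <-> tangency_point dual_config p.
Proof.
split=> -[i [j [ij Ti]]]; have [k [l Dd]] := distinct4_compl2 ij;
  move: (Dd) => /and5P [_ _ _ _ /andP [_ kl]]; exists k, l; split=> //.
- exact: dual_config_tangent (distinct4_swap Dd) Ti.
- have [_ [T _]] := descD; have [p0 T0] := T k l kl.
  have [h1 h2] := tangent_at_on (dual_config_tangent Dd T0).
  by rewrite -(tangent_at_uniq Ti h1 h2).
Qed.

Lemma on_dual_config_opposite i j k p : j != k -> tangent_at (D j) (D k) p ->
  ~ on (D i) p -> on (dual_config i) p.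
Proof.
move=> jk T ni; have [hj hk] := tangent_at_on T.
have ij : i != j by apply/eqP => eij; apply: ni; rewrite eij.
have ik : i != k by apply/eqP => eik; apply: ni; rewrite eik.
move/on_config: hj => hj; move/on_config: hk => hk.
by apply/on_dual_config; apply: (dual_eq0 (descartes_rel_power p) hj hk).
Qed.

Lemma ortho_at_dual_config i j p : on (D i) p -> on (dual_config j) p ->
  ortho_at (D i) (dual_config j) p.
Proof.
move=> hi hj; have ij : i != j.
  apply/eqP => eij; move: hj; rewrite -eij => /on_dual_config di.
  exact: power_sum_neq0 (dual_eq0_sum (proj1 (on_config i p) hi) di).
apply: lorentz0_ortho_at (validD i) (valid_dual_config j) hi hj _.
by rewrite wvec_dual_config -row_Wmx lorentz_row_Dmx // (negbTE ij).
Qed.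

End DualConfiguration.

Theorem mainTheorem4 (R : realType) (D : config R) :
  oriented_descartes D ->
  AutQD (Dmx R) /\
  exists Dp : config R,
    [/\ oriented_descartes Dp,
        Dmx R *m Wmx D = Wmx Dp,
        (forall (i j k : 'I_4) (p : ept R),
            j != k -> tangent_at (D j) (D k) p -> ~ on (D i) p -> on (Dp i) p),
        (forall p : ept R, tangency_point D p <-> tangency_point Dp p)
      & (forall (i j : 'I_4) (p : ept R), tangency_point D p ->
            on (D i) p -> on (Dp j) p -> ortho_at (D i) (Dp j) p)].
Proof.
move=> orD; split; first exact: AutQD_Dmx.
have descD := orD.1; have gramD := oriented_descartes_gram orD.
exists (dual_config D); split.
- exact: oriented_descartes_dual_config.
- exact: Wmx_dual_config.
- exact: on_dual_config_opposite.
- exact: tangency_point_dual_config.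
- by move=> i j p _; apply: ortho_at_dual_config.
Qed.
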